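(* Let $\varepsilon\in(0,1)$ and $\alpha=\frac{\varepsilon}{1+\varepsilon}$. Consider the predator–prey system with simultaneous harvesting of both species $$\dot X=(2-Y-U)X,\qquad \dot Y=(X-U)Y,$$ on $\{X>0,Y>0\}$, under the feedback $U=1+\varepsilon(Y-1)$ (so that the closed loop is $\dot X=-(1+\varepsilon)(Y-1)X$, $\dot Y=[X-1-\varepsilon(Y-1)]Y$). Define $$\Pi(X)=\frac{1}{X^{\alpha}}\Big[X-1-\frac{1+\varepsilon}{\varepsilon}\big(X^{\alpha}-1\big)\Big]$$ and $$V(X,Y)=\Psi(X)+(1+\varepsilon)\Psi(Y)+\Pi(X)+\Psi\!\Big(\frac{Y}{X^{\alpha}}\Big).$$ Then $\Pi(1)=0$ and $\Pi(X)>0$ for $X\in(0,1)\cup(1,\infty)$; $V$ is positive definite with respect to $(1,1)$ and radially unbounded on $\{X>0,Y>0\}$; and along the closed-loop solutions $$\dot V=-\frac{(X-1)\big(X^{\alpha}-1\big)}{X^{\alpha}}-(1+\varepsilon)\varepsilon(Y-1)^2,$$ which is negative definite on the quadrant. Hence $V$ is a strict CLF for the closed loop on $\{X>0,Y>0\}$.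
   Context: $\Psi(S)=S-1-\ln S$ for $S>0$. Radially unbounded on the quadrant means $V\to\infty$ as $(X,Y)$ approaches $\{X=0\}\cup\{Y=0\}$ or as $X+Y\to\infty$. *)

From Stdlib Require Import Reals.
From Coquelicot Require Import Coquelicot.
Open Scope R_scope.

Definition Psi (S : R) : R := S - 1 - ln S.

Definition alpha (eps : R) : R := eps / (1 + eps).

Definition Pi (eps X : R) : R :=
  / Rpower X (alpha eps) *
  (X - 1 - (1 + eps) / eps * (Rpower X (alpha eps) - 1)).

Definition V (eps X Y : R) : R :=
  Psi X + (1 + eps) * Psi Y + Pi eps X + Psi (Y / Rpower X (alpha eps)).

Definition U (eps Y : R) : R := 1 + eps * (Y - 1).

Definition fX (eps X Y : R) : R := (2 - Y - U eps Y) * X.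
Definition fY (eps X Y : R) : R := (X - U eps Y) * Y.

Definition Vdot (eps X Y : R) : R :=
  - ((X - 1) * (Rpower X (alpha eps) - 1) / Rpower X (alpha eps))
  - (1 + eps) * eps * (Y - 1) ^ 2.

(* Everything rests on two elementary inequalities: [ln S <= S - 1], which makes
   [Psi] nonnegative and gives [V >= Psi X + Psi Y], and Bernoulli's inequality
   [X^a <= a X + 1 - a] for [0 < a < 1], which is exactly [Pi >= 0] with
   [a = alpha]. The lower bound [Psi X + Psi Y] already forces definiteness and
   radial unboundedness; the formula for the derivative is a direct computation. *)

From Stdlib Require Import Reals Lra Psatz.
From Coquelicot Require Import Coquelicot.
Open Scope R_scope.

Lemma Psi_1 : Psi 1 = 0.
Proof. unfold Psi; rewrite ln_1; ring. Qed.

Lemma Psi_ge0 S : 0 < S -> 0 <= Psi S.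
Proof.
  intros hS; unfold Psi.
  pose proof (exp_ineq1_le (ln S)) as h; rewrite exp_ln in h; lra.
Qed.

Lemma Psi_gt0 S : 0 < S -> S <> 1 -> 0 < Psi S.
Proof.
  intros hS hS1; unfold Psi.
  pose proof (exp_ineq1 _ (ln_neq_0 S hS1 hS)) as h; rewrite exp_ln in h; lra.
Qed.

Lemma Psi_gt_opp_ln S : 0 < S -> - ln S - 1 < Psi S.
Proof. intros hS; unfold Psi; lra. Qed.

Lemma Psi_ge_half_sub1 S : 0 < S -> S / 2 - 1 <= Psi S.
Proof.
  intros hS; unfold Psi.
  assert (hsplit : ln S = ln 2 + ln (S / 2)).
  { rewrite <- ln_mult by lra; f_equal; field. }
  pose proof (exp_ineq1_le (ln (S / 2))) as h; rewrite exp_ln in h by lra.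
  assert (hln2 : ln 2 < 1).
  { rewrite <- (ln_exp 1); apply ln_increasing; [lra |].
    pose proof (exp_ineq1 1); lra. }
  lra.
Qed.

Lemma Psi_add_gt0 X Y :
  0 < X -> 0 < Y -> (X, Y) <> (1, 1) -> 0 < Psi X + Psi Y.
Proof.
  intros hX hY hXY.
  pose proof (Psi_ge0 X hX); pose proof (Psi_ge0 Y hY).
  destruct (Req_dec X 1) as [-> | hX1].
  - assert (hY1 : Y <> 1) by (intros ->; auto).
    pose proof (Psi_gt0 Y hY hY1); lra.
  - pose proof (Psi_gt0 X hX hX1); lra.
Qed.

Lemma Rpower_pos x a : 0 < Rpower x a.
Proof. apply exp_pos. Qed.

Lemma Rpower_base1 a : Rpower 1 a = 1.
Proof. unfold Rpower; rewrite ln_1, Rmult_0_r; apply exp_0. Qed.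

(* With [p = X^a]: [X = p X^(1-a)] and [1 = p X^(-a)]; bound both powers
   below by their tangent lines in [ln X] and take the [a, 1-a] combination. *)
Lemma Rpower_lt_affine a X :
  0 < a < 1 -> 0 < X -> X <> 1 -> Rpower X a < a * X + (1 - a).
Proof.
  intros ha hX hX1.
  pose proof (ln_neq_0 X hX1 hX) as hL.
  set (L := ln X) in hL.
  set (p := Rpower X a).
  assert (hp : 0 < p) by apply Rpower_pos.
  assert (hXp : X = p * exp ((1 - a) * L)).
  { unfold p, Rpower, L; rewrite <- exp_plus, <- (exp_ln X hX) at 1; f_equal; ring. }
  assert (h1p : 1 = p * exp (- (a * L))).
  { unfold p, Rpower, L; rewrite <- exp_plus, <- exp_0; f_equal; ring. }
  assert (hup : 1 + (1 - a) * L < exp ((1 - a) * L)) by (apply exp_ineq1; nra).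
  assert (hdown : 1 + - (a * L) < exp (- (a * L))) by (apply exp_ineq1; nra).
  assert (p * (1 + (1 - a) * L) < X) by (rewrite hXp; apply Rmult_lt_compat_l; lra).
  assert (p * (1 + - (a * L)) < 1) by (rewrite h1p at 2; apply Rmult_lt_compat_l; lra).
  nra.
Qed.

Lemma Rpower_sub1_same_sign a X :
  0 < a -> 0 < X -> X <> 1 -> 0 < (X - 1) * (Rpower X a - 1).
Proof.
  intros ha hX hX1.
  destruct (Rlt_or_le X 1) as [hlt | hge].
  - pose proof (Rlt_Rpower_l X 1 a ha (conj hX hlt)); rewrite Rpower_base1 in *; nra.
  - assert (hgt : 1 < X) by lra.
    pose proof (Rlt_Rpower_l 1 X a ha (conj Rlt_0_1 hgt)); rewrite Rpower_base1 in *; nra.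
Qed.

Lemma alpha_bounds eps : 0 < eps -> 0 < alpha eps < 1.
Proof.
  intros he; unfold alpha; split.
  - apply Rdiv_lt_0_compat; lra.
  - apply Rmult_lt_reg_r with (1 + eps); [lra |]; field_simplify; lra.
Qed.

Lemma Pi_1 eps : Pi eps 1 = 0.
Proof. unfold Pi; rewrite Rpower_base1; ring. Qed.

Lemma Pi_gt0 eps X : 0 < eps -> 0 < X -> X <> 1 -> 0 < Pi eps X.
Proof.
  intros he hX hX1.
  pose proof (alpha_bounds eps he) as ha.
  pose proof (Rpower_lt_affine _ _ ha hX hX1).
  assert (hinv : (1 + eps) / eps = / alpha eps) by (unfold alpha; field; lra).
  unfold Pi; rewrite hinv.
  apply Rmult_lt_0_compat; [apply Rinv_0_lt_compat, Rpower_pos |].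
  assert (/ alpha eps * (Rpower X (alpha eps) - 1) < X - 1); [| lra].
  apply Rmult_lt_reg_l with (alpha eps); [lra |].
  field_simplify; lra.
Qed.

Lemma Pi_ge0 eps X : 0 < eps -> 0 < X -> 0 <= Pi eps X.
Proof.
  intros he hX.
  destruct (Req_dec X 1) as [-> | hX1].
  - rewrite Pi_1; lra.
  - apply Rlt_le, Pi_gt0; assumption.
Qed.

Lemma V_1_1 eps : V eps 1 1 = 0.
Proof. unfold V; rewrite Pi_1, Rpower_base1, Rdiv_1_r, Psi_1; ring. Qed.

Lemma V_ge_Psi_add eps X Y :
  0 < eps -> 0 < X -> 0 < Y -> Psi X + Psi Y <= V eps X Y.
Proof.
  intros he hX hY; unfold V.
  pose proof (Pi_ge0 eps X he hX); pose proof (Psi_ge0 Y hY).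
  pose proof (Psi_ge0 (Y / Rpower X (alpha eps))
                (Rdiv_lt_0_compat _ _ hY (Rpower_pos _ _))).
  nra.
Qed.

Lemma V_gt0 eps X Y :
  0 < eps -> 0 < X -> 0 < Y -> (X, Y) <> (1, 1) -> 0 < V eps X Y.
Proof.
  intros he hX hY hXY.
  pose proof (V_ge_Psi_add eps X Y he hX hY).
  pose proof (Psi_add_gt0 X Y hX hY hXY); lra.
Qed.

Lemma V_radially_unbounded eps (M : R) : 0 < eps ->
  exists delta K : R, 0 < delta /\
    forall X Y, 0 < X -> 0 < Y -> (X < delta \/ Y < delta \/ K < X + Y) ->
      M < V eps X Y.
Proof.
  intros he; set (m := Rabs M + 2).
  exists (exp (- m)), (4 * m); split; [apply exp_pos |].
  intros X Y hX hY hfar.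
  pose proof (Rle_abs M).
  pose proof (V_ge_Psi_add eps X Y he hX hY).
  pose proof (Psi_ge0 X hX); pose proof (Psi_ge0 Y hY).
  assert (hln : forall S, 0 < S -> S < exp (- m) -> ln S < - m).
  { intros S hS hlt; rewrite <- (ln_exp (- m)); apply ln_increasing; assumption. }
  unfold m in *.
  destruct hfar as [hsmall | [hsmall | hlarge]].
  - pose proof (hln X hX hsmall); pose proof (Psi_gt_opp_ln X hX); lra.
  - pose proof (hln Y hY hsmall); pose proof (Psi_gt_opp_ln Y hY); lra.
  - pose proof (Psi_ge_half_sub1 X hX); pose proof (Psi_ge_half_sub1 Y hY); lra.
Qed.

Lemma V_derive_closed_loop eps (x y : R -> R) (t : R) : 0 < eps ->
  0 < x t -> 0 < y t ->
  is_derive x t (fX eps (x t) (y t)) ->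
  is_derive y t (fY eps (x t) (y t)) ->
  is_derive (fun s => V eps (x s) (y s)) t (Vdot eps (x t) (y t)).
Proof.
  intros he hx hy dx dy.
  pose proof (exp_pos (alpha eps * ln (x t))) as hp.
  unfold V, Pi, Psi, Rpower.
  auto_derive.
  - repeat split; try (eexists; eassumption); try lra.
    apply Rmult_lt_0_compat; [lra | apply Rinv_0_lt_compat; lra].
  - change (Derive (fun s => x s) t) with (Derive x t).
    change (Derive (fun s => y s) t) with (Derive y t).
    rewrite (is_derive_unique _ _ _ dx), (is_derive_unique _ _ _ dy).
    unfold Vdot, Rpower, fX, fY, U, alpha in *.
    field; repeat split; lra.
Qed.

Lemma Vdot_1_1 eps : Vdot eps 1 1 = 0.
Proof. unfold Vdot; rewrite Rpower_base1; field. Qed.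

Lemma Vdot_lt0 eps X Y :
  0 < eps -> 0 < X -> 0 < Y -> (X, Y) <> (1, 1) -> Vdot eps X Y < 0.
Proof.
  intros he hX hY hXY; unfold Vdot.
  assert (hweight : 0 < (1 + eps) * eps) by nra.
  pose proof (Rpower_pos X (alpha eps)) as hp.
  destruct (Req_dec X 1) as [-> | hX1].
  - assert (hY1 : Y <> 1) by (intros ->; auto).
    assert (0 < (Y - 1) ^ 2) by (apply pow2_gt_0; lra).
    rewrite Rpower_base1; unfold Rdiv; rewrite Rinv_1; nra.
  - pose proof (Rpower_sub1_same_sign (alpha eps) X
                  (proj1 (alpha_bounds eps he)) hX hX1).
    assert (0 < (X - 1) * (Rpower X (alpha eps) - 1) / Rpower X (alpha eps))
      by (apply Rdiv_lt_0_compat; assumption).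
    pose proof (pow2_ge_0 (Y - 1)); nra.
Qed.

Theorem theorem2 (eps : R) (Heps : 0 < eps < 1) :
  (* Pi(1) = 0 and Pi > 0 on (0,1) U (1,oo) *)
  (Pi eps 1 = 0 /\ (forall X, 0 < X -> X <> 1 -> 0 < Pi eps X)) /\
  (* V positive definite w.r.t. (1,1) on the open quadrant *)
  (V eps 1 1 = 0 /\
   (forall X Y, 0 < X -> 0 < Y -> (X, Y) <> (1, 1) -> 0 < V eps X Y)) /\
  (* V radially unbounded on the quadrant: V -> +oo as (X,Y) approaches
     {X = 0} U {Y = 0} or as X + Y -> +oo *)
  (forall M : R, exists delta K : R, 0 < delta /\
     forall X Y, 0 < X -> 0 < Y -> (X < delta \/ Y < delta \/ K < X + Y) ->
       M < V eps X Y) /\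
  (* along every closed-loop solution in the quadrant, d/dt V = Vdot *)
  (forall (x y : R -> R) (t : R),
     0 < x t -> 0 < y t ->
     is_derive x t (fX eps (x t) (y t)) ->
     is_derive y t (fY eps (x t) (y t)) ->
     is_derive (fun s => V eps (x s) (y s)) t (Vdot eps (x t) (y t))) /\
  (* Vdot negative definite on the quadrant *)
  (Vdot eps 1 1 = 0 /\
   (forall X Y, 0 < X -> 0 < Y -> (X, Y) <> (1, 1) -> Vdot eps X Y < 0)).
Proof.
  destruct Heps as [he _].
  split; [split; [apply Pi_1 | intros; apply Pi_gt0; assumption] |].
  split; [split; [apply V_1_1 | intros; apply V_gt0; assumption] |].
  split; [intros M; apply V_radially_unbounded; assumption |].
  split; [intros; apply V_derive_closed_loop; assumption |].
  split; [apply Vdot_1_1 | intros; apply Vdot_lt0; assumption].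
Qed.
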